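(* Let $\mathbf{C}$ be a locally small category all of whose morphisms are monomorphisms, and let $\mathfrak{G} = (G_A)_{A \in \mathrm{Ob}(\mathbf{C})}$ be a family of groups with $G_A \le \mathrm{Aut}_\mathbf{C}(A)$ for all $A \in \mathrm{Ob}(\mathbf{C})$. If $\mathbf{C}$ has the $\mathfrak{G}$-Ramsey property, i.e. $t^\mathfrak{G}_\mathbf{C}(A) = 1$ for all $A \in \mathrm{Ob}(\mathbf{C})$, then $\mathrm{Aut}_\mathbf{C}(A) = G_A$ for all $A \in \mathrm{Ob}(\mathbf{C})$. In particular, if $\mathbf{C}$ has the embedding Ramsey property (the case $G_A = \{\mathrm{id}_A\}$ for all $A$), then every object of $\mathbf{C}$ is rigid, i.e. $\mathrm{Aut}_\mathbf{C}(A) = \{\mathrm{id}_A\}$.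
   Context: $\mathrm{Aut}_\mathbf{C}(A)$ is the group of invertible morphisms $A \to A$. For $f, g \in \hom(A,B)$ write $f \sim_\mathfrak{G} g$ if $f = g \cdot \alpha$ for some $\alpha \in G_A$; let $\binom{B}{A}_\mathfrak{G} = \hom(A,B)/{\sim_\mathfrak{G}} = \{f \cdot G_A : f \in \hom(A,B)\}$. For $w \in \hom(B,C)$ and a set $X$ of classes in $\binom{B}{A}_\mathfrak{G}$, $w \cdot X = \{(w\cdot f)/{\sim_\mathfrak{G}} : f/{\sim_\mathfrak{G}} \in X\}$. For $k,t \in \mathbb{N}$ and objects $A \to B \to C$ (meaning the homsets are nonempty), $C \overset{\mathfrak{G}}{\longrightarrow} (B)^A_{k,t}$ means: for every coloring $\chi : \binom{C}{A}_\mathfrak{G} \to k = \{0,\dots,k-1\}$ there is $w \in \hom(B,C)$ with $|\chi(w \cdot \binom{B}{A}_\mathfrak{G})| \le t$. The small $\mathfrak{G}$-Ramsey degree $t^\mathfrak{G}_\mathbf{C}(A)$ is the least positive integer $n$ such that for all $k \in \mathbb{N}$ and all $B \in \mathrm{Ob}(\mathbf{C})$ there is $C \in \mathrm{Ob}(\mathbf{C})$ with $C \overset{\mathfrak{G}}{\longrightarrow} (B)^A_{k,n}$; if no such $n$ exists, $t^\mathfrak{G}_\mathbf{C}(A) = \infty$. *)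

From mathcomp Require Import all_boot.
Set Implicit Arguments. Unset Strict Implicit. Unset Printing Implicit Defensive.

Record Category := {
  Ob :> Type;
  Hom : Ob -> Ob -> Type;
  comp : forall A B C : Ob, Hom B C -> Hom A B -> Hom A C;
  idm : forall A : Ob, Hom A A;
  comp_assoc : forall (A B C D : Ob) (h : Hom C D) (g : Hom B C) (f : Hom A B),
      comp h (comp g f) = comp (comp h g) f;
  comp_id_l : forall (A B : Ob) (f : Hom A B), comp (idm B) f = f;
  comp_id_r : forall (A B : Ob) (f : Hom A B), comp f (idm A) = f
}.

Arguments comp {c A B C} _ _.
Arguments idm {c} A.

Definition all_mono (C : Category) : Prop :=
  forall (A B D : C) (f : Hom B D) (g h : Hom A B), comp f g = comp f h -> g = h.

Definition is_aut (C : Category) (A : C) (f : Hom A A) : Prop :=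
  exists g : Hom A A, comp g f = idm A /\ comp f g = idm A.

Definition subgroup_of_Aut (C : Category) (A : C) (G : Hom A A -> Prop) : Prop :=
  [/\ G (idm A),
      (forall f g, G f -> G g -> G (comp f g)) &
      (forall f, G f -> exists g, G g /\ comp g f = idm A /\ comp f g = idm A)].

Definition group_family (C : Category) (G : forall A : C, Hom A A -> Prop) : Prop :=
  forall A : C, subgroup_of_Aut (G A).

(* A coloring chi : binom(C, A)_G -> k of the classes f/~G, represented as
   a function on hom(A, C) constant on the ~G-classes f . G_A. *)
Definition G_coloring (C : Category) (G : forall A : C, Hom A A -> Prop)
  (A D : C) (k : nat) (chi : Hom A D -> 'I_k) : Prop :=
  forall (f : Hom A D) (a : Hom A A), G A a -> chi (comp f a) = chi f.

Definition G_arrow (C : Category) (G : forall A : C, Hom A A -> Prop)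
  (D B A : C) (k t : nat) : Prop :=
  inhabited (Hom A B) /\ inhabited (Hom B D) /\
  forall chi : Hom A D -> 'I_k, G_coloring G chi ->
    exists w : Hom B D,
      exists S : {set 'I_k}, #|S| <= t /\ forall f : Hom A B, chi (comp w f) \in S.

Definition ramsey_bound (C : Category) (G : forall A : C, Hom A A -> Prop)
  (A : C) (n : nat) : Prop :=
  forall (k : nat) (B : C), inhabited (Hom A B) ->
    exists D : C, G_arrow G D B A k n.

Definition small_ramsey_degree_is (C : Category) (G : forall A : C, Hom A A -> Prop)
  (A : C) (n : nat) : Prop :=
  0 < n /\ ramsey_bound G A n /\ (forall m, 0 < m -> ramsey_bound G A m -> n <= m).

Definition G_Ramsey_property (C : Category) (G : forall A : C, Hom A A -> Prop) : Prop :=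
  forall A : C, small_ramsey_degree_is G A 1.

Definition trivial_family (C : Category) : forall A : C, Hom A A -> Prop :=
  fun A f => f = idm A.

(** Take [B = A], [k = 2] and a witness [D] of the arrow.  Choose a
    representative in every [Aut(A)]-orbit of [hom(A, D)] and colour [h] by
    whether it lies in the [G_A]-class of the representative of its orbit;
    since [G_A <= Aut(A)] this colouring is [G_A]-invariant.  If [f] is in
    [Aut(A)] but not in [G_A], every [w : A -> D] sees both colours: if [w a]
    represents the orbit of [w], then [w a] has colour 0 while [w a f] has
    colour 1, because [w a f = w a g] with [g] in [G_A] forces [f = g] when
    [w a] is mono. *)
From mathcomp Require Import all_boot.
From Stdlib Require Import ClassicalEpsilon FunctionalExtensionality
  PropExtensionality ProofIrrelevance.

Section AutOrbits.
Context {C : Category}.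

Lemma is_aut_id (A : C) : is_aut (idm A).
Proof. by exists (idm A); rewrite comp_id_l. Qed.

Lemma is_aut_comp (A : C) (f g : Hom A A) :
  is_aut f -> is_aut g -> is_aut (comp f g).
Proof.
move=> [f' [f'f ff']] [g' [g'g gg']]; exists (comp g' f'); split.
- by rewrite -comp_assoc (comp_assoc f') f'f comp_id_l g'g.
- by rewrite -comp_assoc (comp_assoc g) gg' comp_id_l ff'.
Qed.

Context {A D : C}.

Definition aut_orbit (h : Hom A D) : Hom A D -> Prop :=
  fun h' => exists2 a, is_aut a & h' = comp h a.

Lemma aut_orbit_comp (h : Hom A D) (b : Hom A A) :
  is_aut b -> aut_orbit (comp h b) = aut_orbit h.
Proof.
move=> /[dup] aut_b [b' [b'b bb']]; apply: functional_extensionality => h'.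
apply: propositional_extensionality; split.
- by move=> [a aut_a ->]; exists (comp b a); [exact: is_aut_comp|rewrite comp_assoc].
- have aut_b' : is_aut b' by exists b.
  move=> [a aut_a ->]; exists (comp b' a); first exact: is_aut_comp.
  by rewrite -comp_assoc (comp_assoc b) bb' comp_id_l.
Qed.

Definition orbit_rep (h : Hom A D) : Hom A D := epsilon (inhabits h) (aut_orbit h).

Lemma orbit_repP (h : Hom A D) : aut_orbit h (orbit_rep h).
Proof.
apply: (epsilon_spec (inhabits h)); exists h, (idm A); first exact: is_aut_id.
by rewrite comp_id_r.
Qed.

Lemma orbit_rep_comp (h : Hom A D) (b : Hom A A) :
  is_aut b -> orbit_rep (comp h b) = orbit_rep h.
Proof.
rewrite /orbit_rep; move: (inhabits (comp h b)) (inhabits h) => i j aut_b.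
by rewrite aut_orbit_comp // (proof_irrelevance _ i j).
Qed.

End AutOrbits.

Section RepresentativeColoring.
Context {C : Category} {G : forall A : C, Hom A A -> Prop}.
Hypothesis groupG : group_family G.

Lemma group_family_sub_aut (A : C) (a : Hom A A) : G A a -> is_aut a.
Proof.
have [_ _ Ginv] := groupG A.
by move=> /Ginv [b [_ ba_id]]; exists b.
Qed.

Context {A D : C}.

Definition G_related (h h' : Hom A D) : Prop := exists2 a, G A a & h' = comp h a.

Lemma G_related_comp (h h' : Hom A D) (b : Hom A A) :
  G A b -> G_related h (comp h' b) <-> G_related h h'.
Proof.
have [_ Gcomp Ginv] := groupG A; move=> Gb; split.
- move=> [a Ga ehb]; have [b' [Gb' [_ bb']]] := Ginv b Gb.
  exists (comp a b'); first exact: Gcomp.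
  by rewrite comp_assoc -ehb -comp_assoc bb' comp_id_r.
- by move=> [a Ga ->]; exists (comp a b); [exact: Gcomp|rewrite comp_assoc].
Qed.

Definition rep_color (h : Hom A D) : 'I_2 :=
  if excluded_middle_informative (G_related (orbit_rep h) h) then ord0 else ord_max.

Lemma rep_color_G_coloring : G_coloring G rep_color.
Proof.
move=> h b Gb; rewrite /rep_color orbit_rep_comp; last exact: group_family_sub_aut.
have rel_comp := G_related_comp (orbit_rep h) h b Gb.
case: excluded_middle_informative => [rel_hb|not_hb];
  case: excluded_middle_informative => [rel_h|not_h] //.
- by case: not_h; apply/rel_comp.
- by case: not_hb; apply/rel_comp.
Qed.

Lemma rep_color_related (h : Hom A D) :
  G_related (orbit_rep h) h -> rep_color h = ord0.
Proof. by rewrite /rep_color; case: excluded_middle_informative. Qed.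

Lemma rep_color_unrelated (h : Hom A D) :
  ~ G_related (orbit_rep h) h -> rep_color h = ord_max.
Proof. by rewrite /rep_color; case: excluded_middle_informative. Qed.

Lemma rep_color_separates (w : Hom A D) (f : Hom A A) :
  all_mono C -> is_aut f -> ~ G A f ->
  exists u : Hom A A, rep_color (comp w u) != rep_color (comp w (comp u f)).
Proof.
move=> mono aut_f notGf; have [u aut_u rep_w] := orbit_repP w.
have rep_wu : orbit_rep (comp w u) = comp w u by rewrite orbit_rep_comp.
exists u; rewrite comp_assoc rep_color_related ?rep_color_unrelated //.
- by rewrite orbit_rep_comp // rep_wu => -[g Gg /mono efg]; case: notGf; rewrite efg.
- by rewrite rep_wu; exists (idm A); [have [] := groupG A|rewrite comp_id_r].
Qed.

End RepresentativeColoring.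

Lemma trivial_family_group (C : Category) : group_family (@trivial_family C).
Proof.
move=> A; split=> [//|f g -> ->|f ->]; first by rewrite comp_id_l.
by exists (idm A); rewrite /trivial_family comp_id_l.
Qed.

Lemma ramsey_bound1_aut (C : Category) (G : forall A : C, Hom A A -> Prop)
    (A : C) (f : Hom A A) :
  all_mono C -> group_family G -> ramsey_bound G A 1 -> is_aut f -> G A f.
Proof.
move=> mono groupG bound aut_f.
case: (excluded_middle_informative (G A f)) => // notGf.
have [D [_ [_ arrow]]] := bound 2 A (inhabits (idm A)).
have [w [S [card_S in_S]]] := arrow _ (rep_color_G_coloring groupG).
have [u] := rep_color_separates groupG w f mono aut_f notGf.
by rewrite (card_le1_eqP card_S _ _ (in_S u) (in_S (comp u f))) eqxx.
Qed.

Theorem proposition3p2 (C : Category) :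
  all_mono C ->
  (forall G : forall A : C, Hom A A -> Prop,
     group_family G -> G_Ramsey_property G ->
     forall (A : C) (f : Hom A A), is_aut f <-> G A f) /\
  (G_Ramsey_property (@trivial_family C) ->
     forall (A : C) (f : Hom A A), is_aut f <-> f = idm A).
Proof.
move=> mono.
have aut_iff_G G : group_family G -> G_Ramsey_property G ->
    forall (A : C) (f : Hom A A), is_aut f <-> G A f.
  move=> groupG ramseyG A f; split; last exact: group_family_sub_aut.
  by have [_ [bound _]] := ramseyG A; apply: ramsey_bound1_aut.
split=> // ramsey_triv; apply: aut_iff_G => //; exact: trivial_family_group.
Qed.
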